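(* Let $H$ be a digraph with at least two vertices and $s\in V(H)$ such that every vertex of $H$ is reachable from $s$, and let $(\hat T,\{B_x\}_{x\in V(\hat T)})$ be the $s$-rooted cut decomposition of $H$. Let $y$ be a node of $\hat T$ such that the path in $\hat T$ from $s$ to $y$ contains at least $\ell\ge 1$ nodes $x$ whose sets $B_x$ are non-degenerate. Then $H$ contains an out-tree rooted at $s$ with at least $\ell$ leaves.
   Context: Digraphs are finite and without loops; paths are directed. An out-tree is an oriented tree with exactly one vertex of in-degree zero (its root); its leaves are its vertices of out-degree zero. A vertex $v$ is bi-reachable from $r$ if there are two internally vertex-disjoint directed paths from $r$ to $v$. For a digraph $H$ with at least two vertices and $r\in V(H)$ such that every vertex of $H$ is reachable from $r$, the diblock $B_r$ of $r$ in $H$ is the set of all vertices bi-reachable from $r$, together with $r$ and all out-neighbours of $r$. For $x\in B_r\setminus\{r\}$ let $X_x$ be the set of vertices $v\in V(H)\setminus B_r$ such that every directed $r$–$v$ path intersects $B_r$ for the last time in $x$; $x$ is a bottleneck of $B_r$ if $X_x\ne\emptyset$ (the sets $X_x$ partition $V(H)\setminus B_r$). The $r$-rooted cut decomposition $(\hat T,\{B_x\}_{x\in V(\hat T)})$ of $H$ is defined recursively: $\hat T$ is a rooted tree with root $r$ and $V(\hat T)\subseteq V(H)$; the set associated with the root is $B_r$; the children of $r$ are the bottlenecks of $B_r$; and for each bottleneck $x$, the subtree of $\hat T$ rooted at $x$ together with its associated sets is the $x$-rooted cut decomposition of the induced subgraph $H[X_x\cup\{x\}]$. A set $B_x$ is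 degenerate if $x$ is an internal (non-leaf) node of $\hat T$ and $|B_x|=2$; otherwise it is non-degenerate. *)

From mathcomp Require Import all_boot.
From Stdlib Require Import ClassicalEpsilon.
Set Implicit Arguments. Unset Strict Implicit. Unset Printing Implicit Defensive.

Definition asbool (P : Prop) : bool :=
  if excluded_middle_informative P then true else false.

Section Digraph.
Variables (V : finType) (E : rel V).

Definition dpath (A : {set V}) (u : V) (p : seq V) (v : V) : bool :=
  [&& path E u p, last u p == v, all (fun w => w \in A) (u :: p) & uniq (u :: p)].

(* internal vertices of the path u :: p (all but first and last) *)
Definition inner (p : seq V) : seq V := take (size p).-1 p.

Definition bireach (A : {set V}) (r v : V) : Prop :=
  exists p1 p2, [&& dpath A r p1 v, dpath A r p2 v & [disjoint inner p1 & inner p2]].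

Definition diblock (A : {set V}) (r : V) : {set V} :=
  [set v in A | [|| v == r, E r v | asbool (bireach A r v)]].

Definition Xset (A : {set V}) (r x : V) : {set V} :=
  [set v in A :\: diblock A r |
    asbool (forall p, dpath A r p v ->
              last r [seq u <- p | u \in diblock A r] = x)].

Definition bottleneck (A : {set V}) (r x : V) : bool :=
  (x \in diblock A r :\ r) && (Xset A r x != set0).

(* B_r is non-degenerate (1) or degenerate (0): degenerate iff r is an
   internal node of the decomposition tree (has a bottleneck child) and |B_r| = 2 *)
Definition nondeg (A : {set V}) (r : V) : nat :=
  ~~ ([exists x, bottleneck A r x] && (#|diblock A r| == 2)).

(* cdpath A r y k : in the r-rooted cut decomposition of H[A], y is a node and
   the tree path from r to y contains exactly k nodes x with B_x non-degenerate. *)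
Inductive cdpath : {set V} -> V -> V -> nat -> Prop :=
| cd_root A r : cdpath A r r (nondeg A r)
| cd_step A r x y k :
    bottleneck A r x -> cdpath (x |: Xset A r x) x y k ->
    cdpath A r y (nondeg A r + k).

Definition und (F : {set V * V}) : rel V := fun u v => ((u, v) \in F) || ((v, u) \in F).

(* (U, F) is an out-tree of H rooted at s: a subgraph of H which is an oriented
   tree (underlying graph connected with #|U|-1 edges, no opposite arcs) whose
   unique vertex of in-degree 0 is s. *)
Definition out_tree (s : V) (U : {set V}) (F : {set V * V}) : Prop :=
  s \in U /\
  [/\ forall a, a \in F -> [&& E a.1 a.2, a.1 \in U & a.2 \in U],
      forall u v, (u, v) \in F -> (v, u) \notin F,
      forall v, v \in U -> connect (und F) s v,
      #|F| = #|U| - 1 &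
      [set v in U | [forall u, (u, v) \notin F]] = [set s]].

Definition leaves (U : {set V}) (F : {set V * V}) : {set V} :=
  [set v in U | [forall w, (v, w) \notin F]].

End Digraph.

From mathcomp Require Import all_boot.
From Stdlib Require Import ClassicalEpsilon.
Set Implicit Arguments. Unset Strict Implicit. Unset Printing Implicit Defensive.

(* Follow the tree path from s to y in the cut decomposition, maintaining an
   out-tree rooted at s whose leaves include the current node r and which meets
   the current vertex set only in r.  To descend from r to a bottleneck x, attach
   an r-x path inside H[A]; it never enters X_x, because every r-path into X_x
   passes through x first, so the invariant is restored with x as the new leaf.
   If B_r is non-degenerate it contains a third vertex z; as z and x are
   out-neighbours of r or bi-reachable from r, there are r-paths to z avoiding x
   and to x avoiding z, and attaching both first makes z a leaf that later
   extensions, living inside X_x, never touch.  At y the current leaf itself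
   pays for B_y. *)


Section OutTree.
Variables (V : finType) (E : rel V) (s : V).

Lemma out_tree1 : out_tree E s [set s] set0.
Proof.
split; first exact: set11.
split=> [a|u v|v /set1P ->||]; rewrite ?in_set0 ?cards0 ?cards1 //.
apply/setP => v; rewrite !inE andb_idr // => _.
by apply/forallP => u; rewrite inE.
Qed.

Lemma leaves1 : leaves [set s] (set0 : {set V * V}) = [set s].
Proof.
apply/setP => v; rewrite !inE andb_idr // => _.
by apply/forallP => u; rewrite inE.
Qed.

Lemma out_tree_add_arc U F u v :
  out_tree E s U F -> u \in U -> v \notin U -> E u v ->
  [/\ out_tree E s (v |: U) ((u, v) |: F),
      v \in leaves (v |: U) ((u, v) |: F) &
      {in leaves U F, forall a, a != u -> a \in leaves (v |: U) ((u, v) |: F)}].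
Proof.
move=> [sU [FE Fasym Fconn Fcard Froot]] uU vU Euv.
have vu : v != u by apply: contraNneq vU => ->.
have vF w : ((v, w) \in F) = false /\ ((w, v) \in F) = false.
  by split; apply/negbTE/negP => /FE /and3P [_]; rewrite ?(negbTE vU) // => _.
split; last 2 first.
- by rewrite !inE eqxx; apply/forallP => w; rewrite !inE xpair_eqE (negbTE vu) (vF w).1.
- move=> a; rewrite !inE => /andP [aU /forallP aF] au.
  by rewrite aU orbT; apply/forallP => w; rewrite !inE xpair_eqE (negbTE au) aF.
split; first by rewrite !inE sU orbT.
split.
- move=> a /setU1P [-> /=|/FE /and3P [Ea a1 a2]]; rewrite !inE.
    by rewrite Euv eqxx uU orbT.
  by rewrite Ea a1 a2 !orbT.
- move=> a b /setU1P [[-> ->]|abF]; rewrite !inE xpair_eqE negb_or.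
    by rewrite (vF u).1 (negbTE vu).
  rewrite (Fasym _ _ abF) andbT; apply: contraTN abF => /andP [_ /eqP ->].
  by rewrite (vF b).1.
- have sub : subrel (und F) (connect (und ((u, v) |: F))).
    by move=> a b ab; apply: connect1; move: ab; rewrite /und !inE => /orP [] ->; rewrite !orbT.
  move=> w /setU1P [->|wU]; last exact: (connect_sub sub (Fconn _ wU)).
  apply: connect_trans (connect_sub sub (Fconn _ uU)) (connect1 _).
  by rewrite /und /= setU11.
- rewrite !cardsU1 (negbTE vU) (vF u).2 Fcard.
  by rewrite addnBA // card_gt0; apply/set0Pn; exists s.
- rewrite -Froot; apply/setP => w; rewrite !inE.
  have [-> | wv] /= := eqVneq w v.
    by rewrite (negbTE vU); apply/negbTE/forallPn; exists u; rewrite !inE eqxx.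
  case: (w \in U) => //=; apply: eq_forallb => a.
  by rewrite !inE xpair_eqE (negbTE wv) andbF.
Qed.

Lemma out_tree_attach_path U F r p :
  out_tree E s U F -> r \in U -> path E r p -> last r p \notin U ->
  exists U' F', [/\ out_tree E s U' F', U \subset U', U' \subset U :|: [set v in p],
     last r p \in leaves U' F' &
     {in leaves U F, forall a, a \notin r :: p -> a \in leaves U' F'}].
Proof.
elim: p r U F => [|v p IH] r U F tree rU; first by rewrite /= rU.
rewrite /= => /andP [Erv vp] lastU.
have sub_cons (W : {set V}) : W :|: [set w in p] \subset W :|: [set w in v :: p].
  by apply/setUS/subsetP => w; rewrite !inE => ->; rewrite orbT.
have [vU | vU] := boolP (v \in U).
  have [U' [F' [tree' subU sub' leaf' keep']]] := IH v U F tree vU vp lastU.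
  exists U', F'; split=> //; first exact: subset_trans sub' (sub_cons U).
  by move=> a aL; rewrite in_cons negb_or => /andP [_]; apply: keep'.
have [tree1 vL keep1] := out_tree_add_arc tree rU vU Erv.
have [lastv | lastv] := eqVneq (last v p) v.
  exists (v |: U), ((r, v) |: F); rewrite lastv; split=> //; first exact: subsetUr.
    by apply/subsetP => w; rewrite !inE => /orP [->|->]; rewrite ?orbT.
  by move=> a aL; rewrite in_cons negb_or => /andP [ar _]; apply: keep1.
have lastvU : last v p \notin v |: U by rewrite in_setU1 negb_or lastv.
have [U' [F' [tree' subU sub' leaf' keep']]] := IH v _ _ tree1 (setU11 v U) vp lastvU.
exists U', F'; split=> //; first by apply: subset_trans subU; apply: subsetUr.
  apply: subset_trans sub' _; apply/subsetP => w; rewrite !inE.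
  by case/orP => [/orP [->|->]|->]; rewrite ?orbT.
move=> a aL; rewrite in_cons negb_or => /andP [ar avp].
by apply: keep' avp; apply: keep1.
Qed.
End OutTree.

Lemma asboolP (P : Prop) : reflect P (asbool P).
Proof. by rewrite /asbool; case: excluded_middle_informative => h; constructor. Qed.

Lemma mem_inner (T : finType) (x u : T) (p : seq T) :
  x \in p -> x != last u p -> x \in inner p.
Proof.
case/lastP: p => [|q a] //; rewrite /inner size_rcons -cats1 take_size_cat //.
by rewrite last_cat mem_cat inE => /orP [//|/eqP ->]; rewrite eqxx.
Qed.

Lemma inner_cat (T : finType) (p1 p2 : seq T) (u : T) :
  inner (p1 ++ u :: p2) = p1 ++ inner (u :: p2).
Proof. by rewrite /inner size_cat /= addnS /= takeD take_size_cat // drop_size_cat. Qed.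

Section Diblock.
Variables (V : finType) (E : rel V) (A : {set V}) (r : V).

Lemma dpath_last_notin_inner p t : dpath E A r p t -> t \notin inner p.
Proof.
case/and4P => _ /eqP <- _; case/lastP: p => [|q a] //=.
rewrite /inner size_rcons -cats1 take_size_cat // cats1 last_rcons.
by case/andP => _; rewrite rcons_uniq => /andP [].
Qed.

Lemma dpath_prefix p1 u p2 t :
  dpath E A r (p1 ++ u :: p2) t -> dpath E A r (rcons p1 u) u.
Proof.
rewrite -cat_rcons /dpath -cat_cons cat_path all_cat cat_uniq last_rcons eqxx.
by case/and4P => /andP [-> _] _ /andP [-> _] /andP [-> _].
Qed.

Hypothesis rA : r \in A.

Lemma diblock_path_avoiding t z :
  t \in diblock E A r -> t != r -> z != t ->
  exists2 p, dpath E A r p t & z \notin p.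
Proof.
rewrite inE => /andP [tA /or3P [/eqP -> | Ert | /asboolP bi]]; rewrite ?eqxx // => tr zt.
  exists [:: t]; last by rewrite inE.
  by rewrite /dpath /= Ert eqxx rA tA inE eq_sym tr.
have [p1 [p2 /and3P [d1 d2 dis]]] := bi.
have [z1 | ] := boolP (z \in p1); last by exists p1.
have [z2 | ] := boolP (z \in p2); last by exists p2.
have inner_z p : dpath E A r p t -> z \in p -> z \in inner p.
  by case/and4P => _ /eqP lt _ _ zp; apply: (mem_inner (u := r)); rewrite ?lt.
by have := inner_z _ d2 z2; rewrite (disjointFr dis (inner_z _ d1 z1)).
Qed.

Lemma dpath_notin_Xset p t x :
  dpath E A r p t -> x != r -> x \notin inner p ->
  {in p, forall u, u \notin Xset E A r x}.
Proof.
move=> dp xr xp u /splitPr eq_p; case: eq_p dp xp => p1 p2 dp.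
rewrite inner_cat mem_cat negb_or => /andP [xp1 _].
apply/negP; rewrite inE => /andP [/setDP [_ uB] /asboolP lastX].
have := lastX _ (dpath_prefix dp); rewrite filter_rcons (negbTE uB) => lastx.
have := mem_last r [seq w <- p1 | w \in diblock E A r].
by rewrite lastx inE (negbTE xr) mem_filter (negbTE xp1) andbF.
Qed.

End Diblock.

Section CutStep.
Variables (V : finType) (E : rel V) (s : V) (A : {set V}) (r x : V).
Variables (U : {set V}) (F : {set V * V}).
Hypotheses (rA : r \in A) (bx : bottleneck E A r x).
Hypotheses (tree : out_tree E s U F) (rU : r \in U).
Hypothesis UA : {in U, forall w, w \in A -> w = r}.

Let child := x |: Xset E A r x.

Let rB : r \in diblock E A r. Proof. by rewrite !inE rA eqxx. Qed.
Let xr : x != r. Proof. by case/andP: bx; rewrite !inE => /andP []. Qed.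
Let xB : x \in diblock E A r. Proof. by case/andP: bx => /setD1P []. Qed.

Let notin_U t : t \in diblock E A r -> t != r -> t \notin U.
Proof. by rewrite inE => /andP [tA _]; apply: contra_neqN => /UA; apply. Qed.

Let dpath_fresh p t : dpath E A r p t -> {in U, forall a, a != r -> a \notin r :: p}.
Proof.
case/and4P => _ _ /allP pA _ a aU ar; rewrite inE negb_or ar.
by apply: contra_neqN ar => ap; apply: (UA aU); apply: pA; rewrite inE ap orbT.
Qed.

Let U_child : {in U, forall w, w \in child -> w = x}.
Proof.
move=> w wU; rewrite /child in_setU1 => /orP [/eqP //|].
rewrite in_set in_setD => /andP [/andP [wB wA] _].
by move: wB; rewrite (UA wU wA) rB.
Qed.

Let dpath_child p t :
  dpath E A r p t -> x \notin inner p -> {in p, forall w, w \in child -> w = x}.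
Proof.
move=> dp xp w wp; rewrite /child in_setU1 => /orP [/eqP //|wX].
by have := dpath_notin_Xset dp xr xp wp; rewrite wX.
Qed.

Let attach_dpath U0 F0 p t :
  out_tree E s U0 F0 -> r \in U0 -> dpath E A r p t -> t \notin U0 ->
  exists U1 F1, [/\ out_tree E s U1 F1, r \in U1, U1 \subset U0 :|: [set v in p],
     t \in leaves U1 F1 & {in leaves U0 F0, forall a, a \notin r :: p -> a \in leaves U1 F1}].
Proof.
move=> tree0 rU0 /and4P [pth /eqP <- _ _] tU0.
have [U1 [F1 [tree1 sub0 sub1 tL keep]]] := out_tree_attach_path tree0 rU0 pth tU0.
by exists U1, F1; split=> //; apply: subsetP sub0 _ rU0.
Qed.

Lemma cut_step : exists U1 F1, [/\ out_tree E s U1 F1, x \in leaves U1 F1,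
    {in U1, forall w, w \in child -> w = x} &
    #|leaves U F :\ r| + nondeg E A r <= #|leaves U1 F1 :\ x|].
Proof.
have old_leaf a : a \in leaves U F :\ r -> [/\ a \in U, a != r & a != x].
  rewrite !inE => /andP [ar /andP [aU _]]; split=> //.
  by apply: contraTneq aU => ->; apply: notin_U.
rewrite /nondeg (introT existsP (ex_intro _ x bx)) /=.
have rx : r != x by rewrite eq_sym xr.
have [B2 | B3] := eqVneq #|diblock E A r| 2.
  have [p dp _] := diblock_path_avoiding rA xB xr rx.
  have [U1 [F1 [tree1 _ sub1 xL keep]]] := attach_dpath tree rU dp (notin_U xB xr).
  exists U1, F1; split=> //.
    move=> w /(subsetP sub1); rewrite inE => /orP [/U_child //|].
    by rewrite inE; apply: (dpath_child dp (dpath_last_notin_inner dp)).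
  rewrite addn0; apply/subset_leq_card/subsetP => a aL; have [aU ar ax] := old_leaf a aL.
  by rewrite in_setD1 ax keep ?(dpath_fresh dp aU ar) //; case/setD1P: aL.
have : 0 < #|diblock E A r :\ x :\ r|.
  move: B3; rewrite (cardsD1 x) xB (cardsD1 r (_ :\ x)) in_setD1 rx rB.
  by case: #|_|.
case/card_gt0P => z; rewrite !in_setD1 => /and3P [zr zx zB].
have xz : x != z by rewrite eq_sym.
have [q dq xq] := diblock_path_avoiding rA zB zr xz.
have [p dp zp] := diblock_path_avoiding rA xB xr zx.
have [U1 [F1 [tree1 rU1 sub1 zL1 keep1]]] := attach_dpath tree rU dq (notin_U zB zr).
have xU1 : x \notin U1.
  by apply/negP => /(subsetP sub1); rewrite !inE (negbTE (notin_U xB xr)) (negbTE xq).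
have [U2 [F2 [tree2 _ sub2 xL2 keep2]]] := attach_dpath tree1 rU1 dp xU1.
exists U2, F2; split=> //.
  move=> w /(subsetP sub2); rewrite inE => /orP [/(subsetP sub1)|].
    rewrite inE => /orP [/U_child //|]; rewrite inE.
    by apply: (dpath_child dq); apply: contra xq; apply: mem_take.
  by rewrite inE; apply: (dpath_child dp (dpath_last_notin_inner dp)).
have zL : z \notin leaves U F :\ r by rewrite !inE (negbTE (notin_U zB zr)) !andbF.
rewrite /= addn1 -[_.+1]/(true + _) -zL -cardsU1; apply/subset_leq_card/subsetP => a.
case/setU1P => [-> | aL].
  by rewrite in_setD1 zx keep2 // inE negb_or zr.
have [aU ar ax] := old_leaf a aL; case/setD1P: aL => _ aL.
by rewrite in_setD1 ax keep2 ?keep1 ?(dpath_fresh dq aU ar) ?(dpath_fresh dp aU ar).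
Qed.

End CutStep.

Lemma cdpath_out_tree_leaves (V : finType) (E : rel V) (s : V) A r y k U F :
  cdpath E A r y k -> r \in A -> out_tree E s U F -> r \in leaves U F ->
  {in U, forall w, w \in A -> w = r} ->
  exists U' F', out_tree E s U' F' /\ #|leaves U F :\ r| + k <= #|leaves U' F'|.
Proof.
move=> cd; elim: cd U F => {A r y k} [A r | A r x y k bx _ IH] U F rA tree rL UA.
  exists U, F; split=> //.
  by rewrite [X in _ <= X](cardsD1 r) rL addnC leq_add2r leq_b1.
have rU : r \in U by case/setIdP: rL.
have [U1 [F1 [tree1 xL UX le1]]] := cut_step rA bx tree rU UA.
have [U' [F' [tree' le']]] := IH U1 F1 (setU11 _ _) tree1 xL UX.
by exists U', F'; rewrite addnA (leq_trans (leq_add le1 (leqnn k)) le').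
Qed.

Theorem lemma11 (V : finType) (E : rel V) (s y : V) (k l : nat) :
  irreflexive E ->
  1 < #|V| ->
  (forall v, connect E s v) ->
  cdpath E [set: V] s y k ->
  0 < l -> l <= k ->
  exists (U : {set V}) (F : {set V * V}),
    out_tree E s U F /\ l <= #|leaves U F|.
Proof.
(* The counting argument does not need the hypotheses on H themselves. *)
move=> _ _ _ cd _ lk.
have sL : s \in leaves [set s] (set0 : {set V * V}) by rewrite leaves1 set11.
have UA : {in [set s], forall w, w \in [set: V] -> w = s} by move=> w /set1P.
have [U [F [tree le]]] := cdpath_out_tree_leaves cd (in_setT s) (out_tree1 E s) sL UA.
exists U, F; split=> //; apply: leq_trans lk _.
by move: le; rewrite leaves1 setDv cards0.
Qed.
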